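(* Let $\mu\in\mathcal P_c^*(\mathbb R^2)$, $\mathbf A\in\mathrm{GL}(2)$, $\mathbf y\in\mathbb R^2$ and $\mu_{\mathbf A,\mathbf y}=(\mathbf A\cdot+\mathbf y)_\#\mu$. Then for every $\theta\in\mathbb S_1$, $$\mathcal N_\theta[\mu_{\mathbf A,\mathbf y}]=\mathcal N_{\mathbf A^\top\theta/\|\mathbf A^\top\theta\|}[\mu].$$
   Context: $\mathbb S_1=\{x\in\mathbb R^2:\|x\|=1\}$; $\mathcal R_\theta[\mu]=(\langle\cdot,\theta\rangle)_\#\mu$. Fix a reference Borel probability measure $\rho$ on $\mathbb R$ without atoms. For a probability measure $\nu$ on $\mathbb R$ with $F_\nu(t)=\nu((-\infty,t])$, $F_\nu^{[-1]}(t)=\inf\{s:F_\nu(s)>t\}$ and the CDT is $\hat\nu=F_\nu^{[-1]}\circ F_\rho$; $\widehat{\mathcal R}_\theta[\mu]$ is the CDT of $\mathcal R_\theta[\mu]$. For $g\in L^2_\rho(\mathbb R)$, $\operatorname{mean}(g)=\int g\,\mathrm d\rho$, $\operatorname{std}(g)=(\int|g-\operatorname{mean}(g)|^2\mathrm d\rho)^{1/2}$. $\mathcal P_c^*(\mathbb R^2)$ is the set of compactly supported Borel probability measures on $\mathbb R^2$ whose support has affine hull of dimension $>1$. For such $\mu$, the normalized R-CDT is $\mathcal N_\theta[\mu](t)=\big(\widehat{\mathcal R}_\theta[\mu](t)-\operatorname{mean}(\widehat{\mathcal R}_\theta[\mu])\big)/\operatorname{std}(\widehat{\mathcal R}_\theta[\mu])$,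 $t\in\mathbb R$. *)

From HB Require Import structures.
From mathcomp Require Import all_boot all_order all_algebra.
From mathcomp Require Import all_classical all_reals all_analysis.
Set Implicit Arguments. Unset Strict Implicit. Unset Printing Implicit Defensive.
Import Order.TTheory GRing.Theory Num.Theory.
Import numFieldNormedType.Exports.
Local Open Scope classical_set_scope.
Local Open Scope ring_scope.

Definition dot2 {R : realType} (x v : R * R) : R := x.1 * v.1 + x.2 * v.2.

Definition norm2 {R : realType} (x : R * R) : R := Num.sqrt (dot2 x x).

Definition S1 {R : realType} : set (R * R) := [set x | norm2 x = 1].

Definition mxapp2 {R : realType} (A : 'M[R]_2) (x : R * R) : R * R :=
  (A 0 0 * x.1 + A 0 1 * x.2, A 1 0 * x.1 + A 1 1 * x.2).

Definition scale2 {R : realType} (c : R) (x : R * R) : R * R := (c * x.1, c * x.2).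

Definition affmap2 {R : realType} (A : 'M[R]_2) (y : R * R) (x : R * R) : R * R :=
  (( mxapp2 A x).1 + y.1, (mxapp2 A x).2 + y.2).

(* Support of a measure on R^2: points all of whose (open) balls have
   positive measure (= the smallest closed set of full measure). *)
Definition msupp {R : realType} (mu : set (R * R) -> \bar R) : set (R * R) :=
  [set x | forall e : R, 0 < e -> (0 < mu (ball x e))%E].

(* Dimension of the affine hull of S ⊆ R^2 is > 1, i.e. S contains three
   affinely independent points. *)
Definition affdim_gt1 {R : realType} (S : set (R * R)) : Prop :=
  exists x0 x1 x2, [/\ S x0, S x1, S x2 &
    (x1.1 - x0.1) * (x2.2 - x0.2) - (x1.2 - x0.2) * (x2.1 - x0.1) != 0].

Definition Pcstar {R : realType} (mu : probability (R * R)%type R) : Prop :=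
  compact (msupp mu) /\ affdim_gt1 (msupp mu).

Definition radon {R : realType} (mu : set (R * R) -> \bar R) (theta : R * R)
  : set R -> \bar R := pushforward mu (fun x => dot2 x theta).

Definition cdf {R : realType} (nu : set R -> \bar R) (t : R) : R :=
  fine (nu [set` `]-oo, t]]).

(* Generalized inverse F^[-1](t) = inf { s | F(s) > t }, valued in the
   extended reals (inf of the empty set is +oo). *)
Definition ginv {R : realType} (F : R -> R) (t : R) : \bar R :=
  ereal_inf [set s%:E | s in [set s : R | t < F s]].

Definition cdt {R : realType} (rho : set R -> \bar R) (nu : set R -> \bar R)
  : R -> \bar R := fun t => ginv (cdf nu) (cdf rho t).

Definition mean {R : realType} (rho : probability R R) (g : R -> \bar R) : R :=
  fine (\int[rho]_x g x)%E.

Definition std {R : realType} (rho : probability R R) (g : R -> \bar R) : R :=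
  Num.sqrt (fine (\int[rho]_x ((g x - (mean rho g)%:E) * (g x - (mean rho g)%:E)))%E).

Definition NRCDT {R : realType} (rho : probability R R)
  (mu : set (R * R) -> \bar R) (theta : R * R) : R -> \bar R :=
  fun t => let g := cdt rho (radon mu theta) in
    ((g t - (mean rho g)%:E) * ((std rho g)^-1)%:E)%E.

Definition mu_Ay {R : realType} (mu : set (R * R) -> \bar R) (A : 'M[R]_2)
  (y : R * R) : set (R * R) -> \bar R := pushforward mu (affmap2 A y).

(* Let v := A^T theta, c := |v| > 0, w := v / c and b := <y, theta>.  Since
   <A x + y, theta> = c <x, w> + b, the CDF of R_theta[mu_{A,y}] is that of
   R_w[mu] precomposed with s |-> (s - b) / c, so its generalized inverse, and
   hence its CDT, is c * CDT(R_w[mu]) + b; normalizing by mean and standard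
   deviation removes any such positive affine change.  The CDT is +oo where
   F_rho reaches 1, a rho-null set since rho has no atoms, and bounded
   elsewhere since mu has compact support, so its mean and standard deviation
   are those of a bounded measurable function. *)

From Pilot Require Import Defs.
From HB Require Import structures.
From mathcomp Require Import all_boot all_order all_algebra.
From mathcomp Require Import all_classical all_reals all_analysis.
From mathcomp Require Import measurable_realfun.
From mathcomp Require Import ring.
Import Order.TTheory GRing.Theory Num.Theory.
Import numFieldNormedType.Exports.
Local Open Scope classical_set_scope.
Local Open Scope ring_scope.

Section Plane.
Context {R : realType}.
Implicit Types (x y v : R * R) (A : 'M[R]_2).

Lemma det_mx2 A : \det A = A 0 0 * A 1 1 - A 0 1 * A 1 0.
Proof.
rewrite (expand_det_row _ 0) !big_ord_recl big_ord0 /cofactor !det_mx11 !mxE /=.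
have -> : lift 0 (0 : 'I_1) = 1 :> 'I_2 by apply/val_inj.
have -> : lift 1 (0 : 'I_1) = 0 :> 'I_2 by apply/val_inj.
by rewrite expr0 expr1; ring.
Qed.

Lemma mxapp2_eq0 A x : \det A != 0 -> mxapp2 A x = (0, 0) -> x = (0, 0).
Proof.
move=> detA [Ax1 Ax2].
have : \det A * x.1 = A 1 1 * (A 0 0 * x.1 + A 0 1 * x.2)
                      - A 0 1 * (A 1 0 * x.1 + A 1 1 * x.2).
  by rewrite det_mx2; ring.
have : \det A * x.2 = A 0 0 * (A 1 0 * x.1 + A 1 1 * x.2)
                      - A 1 0 * (A 0 0 * x.1 + A 0 1 * x.2).
  by rewrite det_mx2; ring.
rewrite Ax1 Ax2 !mulr0 subr0 => /eqP + /eqP.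
rewrite !mulf_eq0 (negbTE detA) /= => /eqP x2 /eqP x1.
by case: x x1 x2 {Ax1 Ax2} => /= ? ? -> ->.
Qed.

Lemma norm2_gt0 x : x != (0, 0) -> 0 < norm2 x.
Proof.
move=> x0; rewrite sqrtr_gt0 lt_def addr_ge0 ?mul_ge0 ?sqr_ge0 // andbT.
rewrite /dot2 paddr_eq0 ?sqr_ge0 // !mulf_eq0 !orbb.
by case: x x0 => a b /=; apply: contra => /andP[/eqP -> /eqP ->].
Qed.

Lemma S1_neq0 {x} : S1 x -> x != (0, 0).
Proof.
apply: contraPneq => ->.
by rewrite /S1 /= /norm2 /dot2 /= mulr0 addr0 sqrtr0 => /eqP; rewrite eq_sym oner_eq0.
Qed.

Lemma dot2_affmap2 A y x v :
  dot2 (affmap2 A y x) v = dot2 x (mxapp2 A^T v) + dot2 y v.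
Proof. by rewrite /dot2 /affmap2 /mxapp2 /= !mxE; ring. Qed.

Lemma dot2_scale2 x k v : dot2 x (scale2 k v) = k * dot2 x v.
Proof. by rewrite /dot2 /scale2 /=; ring. Qed.

End Plane.

Section GeneralizedInverse.
Context {R : realType}.
Implicit Types (F : R -> R) (u : R).
Local Open Scope ereal_scope.

Lemma ereal_inf_addr (X : set (\bar R)) (b : R) :
  ereal_inf [set x + b%:E | x in X] = ereal_inf X + b%:E.
Proof.
gen have le_inf : b X / ereal_inf X + b%:E <= ereal_inf [set x + b%:E | x in X].
  apply: le_ereal_inf_tmp => _ [x Xx <-].
  by rewrite leeD2r //; exact: ereal_inf_lbound.
apply/eqP; rewrite eq_le le_inf andbT -leeBlDr //.
apply: le_trans (le_inf (- b)%R _) _.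
by rewrite image_comp; under eq_imagel do rewrite /= EFinN addeK //; rewrite image_id.
Qed.

Lemma ginv_comp_affine F (c b : R) u : (0 < c)%R ->
  ginv (fun s => F ((s - b) / c)%R) u = c%:E * ginv F u + b%:E.
Proof.
move=> c0; rewrite /ginv -ereal_inf_pZl // -ereal_inf_addr !image_comp.
congr ereal_inf; apply/seteqP; split=> _ [s Fs <-].
  exists ((s - b) / c)%R => //=.
  by rewrite -EFinM -EFinD mulrC divfK ?gt_eqF // subrK.
exists (c * s + b)%R => /=; last by rewrite EFinD EFinM.
by rewrite addrK [(c * s)%R]mulrC mulfK ?gt_eqF.
Qed.

Lemma ginv_le F : {homo ginv F : u v / (u <= v)%R >-> u <= v}.
Proof.
move=> u v uv; apply: ereal_inf_le_tmp => _ [s Fs <-].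
by exists s => //=; exact: le_lt_trans Fs.
Qed.

Lemma ginv_bounded F (a b : R) u :
  (forall s, (s < a)%R -> F s = 0%R) -> (forall s, (b <= s)%R -> F s = 1%R) ->
  (0 <= u < 1)%R -> a%:E <= ginv F u <= b%:E.
Proof.
move=> Fa Fb /andP[u0 u1]; apply/andP; split.
  apply: le_ereal_inf_tmp => _ [s /= Fs <-]; rewrite lee_fin leNgt.
  by apply/negP => /Fa sa; move: Fs; rewrite sa ltNge u0.
by apply: ereal_inf_lbound; exists b => //=; rewrite Fb.
Qed.

Lemma ginv_ge1 F u : (forall s, (F s <= 1)%R) -> (1 <= u)%R -> ginv F u = +oo.
Proof.
move=> F1 u1; rewrite /ginv (_ : [set s | _] = set0) ?image_set0 ?ereal_inf0 //.
by apply/seteqP; split=> // s /= /lt_le_trans /(_ (F1 s)); rewrite ltNge u1.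
Qed.

End GeneralizedInverse.

Lemma negligible_bigcup_count d (T : measurableType d) (R : realType)
    (mu : {measure set T -> \bar R}) (I : countType) (F : I -> set T) :
  (forall i, mu.-negligible (F i)) -> mu.-negligible (\bigcup_i F i).
Proof.
move=> Fnull; apply: (@negligibleS _ _ _ _ (\bigcup_n oapp F set0 (unpickle n))).
  by move=> x [i _ Fix]; exists (pickle i); rewrite //= pickleK.
apply: negligible_bigcup => n; case: unpickle => [i|] /=; first exact: Fnull.
exact: negligible_set0.
Qed.

Section Support.
Context {R : realType}.

Lemma exists_rat_ball (x : R) {r : R} : 0 < r -> exists q : rat, ball (ratr q : R) r x.
Proof.
move=> r0; have /rat_in_itvoo[q] : x - r < x + r by rewrite ltrD2l gtrN.
rewrite in_itv /= => /andP[xq qx]; exists q.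
by rewrite /ball /= ltr_distlC ltrBlDr -[x < _]ltrBlDr qx xq.
Qed.

Lemma measurable_ball2 (x : R * R) (e : R) : measurable (ball x e).
Proof. by apply: measurableX; exact: measurable_ball. Qed.

(* Lindelof: the complement of the support is covered by the null balls with
   rational centre and radius. *)
Lemma msupp_compl_negligible (mu : {measure set (R * R) -> \bar R}) :
  mu.-negligible (~` msupp mu).
Proof.
pose B (i : rat * rat * rat) : set (R * R) :=
  ball (ratr i.1.1 : R, ratr i.1.2 : R) (ratr i.2).
pose N i := B i `&` [set _ | mu (B i) = 0%E].
apply: (@negligibleS _ _ _ _ (\bigcup_i N i)); last first.
  apply: negligible_bigcup_count => i.
  have [B0|/eqP B0] := eqVneq (mu (B i)) 0%E.
    by exists (B i); split; [exact: measurable_ball2|by []|move=> x []].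
  by exists set0; split => // x [].
move=> x /existsNP[e /not_implyP[e0 /negP]]; rewrite -leNgt => mue.
have /rat_in_itvoo[r] : 0 < e / 2 by rewrite divr_gt0.
rewrite in_itv /= => /andP[r0 re].
have [q1 xq1] := exists_rat_ball x.1 r0.
have [q2 xq2] := exists_rat_ball x.2 r0.
have Bx : B (q1, q2, r) x by [].
exists (q1, q2, r) => //; split=> //=.
apply/eqP; rewrite eq_le measure_ge0 andbT; apply: le_trans mue.
apply: le_measure; rewrite ?inE; try exact: measurable_ball2.
move=> z /(ball_triangle (ball_sym Bx)).
by apply: le_ball; apply/ltW; rewrite [e]splitr ltrD.
Qed.

Lemma measurable_dot2 (w : R * R) : measurable_fun setT (fun x : R * R => dot2 x w).
Proof. by apply: measurable_funD; apply: measurable_funM. Qed.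

Lemma compact_msupp_dot2_bounded {mu : {measure set (R * R) -> \bar R}} (w : R * R) :
  compact (msupp mu) -> exists2 K, 0 <= K & {ae mu, forall x, `|dot2 x w| <= K}.
Proof.
move=> /compact_bounded[M [_ supp_bounded]].
set B := `|M| + 1.
have /supp_bounded suppB : M < B by rewrite (le_lt_trans (ler_norm M)) ?ltrDl.
exists (B * (`|w.1| + `|w.2|)); first by rewrite mulr_ge0 ?addr_ge0.
apply: negligibleS (msupp_compl_negligible mu) => x /= dotx /suppB /= xB.
apply: dotx; have [x1B x2B] : `|x.1| <= B /\ `|x.2| <= B.
  by split; apply: le_trans xB; rewrite le_max lexx ?orbT.
by rewrite mulrDr (le_trans (ler_normD _ _)) // !normrM lerD // ler_wpM2r.
Qed.

End Support.

Section PushforwardCdf.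
Context {d} {T : measurableType d} {R : realType} (P : probability T R) {f : T -> R}.
Hypothesis mf : measurable_fun setT f.

Let measurable_preimage_ray s : measurable (f @^-1` [set` `]-oo, s]]).
Proof. by rewrite -[X in measurable X]setTI; exact: mf. Qed.

Lemma cdf_pushforward_le1 s : Defs.cdf (pushforward P f) s <= 1.
Proof.
rewrite -lee_fin fineK ?fin_num_measure //.
exact: probability_le1.
Qed.

Variable K : R.
Hypothesis fK : {ae P, forall x, `|f x| <= K}.

Lemma cdf_pushforward_eq0 s : s < - K -> Defs.cdf (pushforward P f) s = 0.
Proof.
move=> sK; rewrite /Defs.cdf /pushforward (negligibleP _ _).1 //.
apply: negligibleS fK => x /=; rewrite in_itv /= ler_norml => fxs /andP[Kfx _].
by move: (le_lt_trans Kfx (le_lt_trans fxs sK)); rewrite ltxx.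
Qed.

Lemma cdf_pushforward_eq1 s : K <= s -> Defs.cdf (pushforward P f) s = 1.
Proof.
move=> Ks; rewrite /Defs.cdf /pushforward -[X in P X]setCK probability_setC.
  rewrite (negligibleP _ _).1 ?sube0 //; first exact: measurableC.
  apply: negligibleS fK => x /= fxs fxK; apply: fxs.
  by rewrite in_itv /= (le_trans (ler_norm _) (le_trans fxK Ks)).
exact: measurableC.
Qed.

End PushforwardCdf.

Section Cdf.
Context {R : realType}.

Lemma cdf_ge0 (nu : {measure set R -> \bar R}) t : 0 <= Defs.cdf nu t.
Proof. exact/fine_ge0/measure_ge0. Qed.

Lemma cdf_le (nu : {finite_measure set R -> \bar R}) :
  {homo Defs.cdf nu : s t / s <= t}.
Proof.
move=> s t st; apply: fine_le; rewrite ?fin_num_measure //.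
by apply: le_measure; rewrite ?inE // => x /=; rewrite !in_itv /= => /le_trans; apply.
Qed.

Lemma cdf_ge1_tail_negligible (rho : probability R R) {t} :
  1 <= Defs.cdf rho t -> rho.-negligible `]t, +oo[.
Proof.
move=> rho1; exists (~` [set` `]-oo, t]]); split.
- exact: measurableC.
- have ray1 : rho [set` `]-oo, t]] = 1%E.
    apply/eqP; rewrite eq_le probability_le1 //=.
    by rewrite -(fineK (fin_num_measure _ _ _)) ?lee_fin.
  by rewrite probability_setC // ray1 subee.
- by move=> x /=; rewrite !in_itv /= andbT ltNge => /negP.
Qed.

(* The set is an up-ray: besides its minimum, if any (a null atom), it is
   covered by the countably many null tails ]q, +oo[ with q rational. *)
Lemma cdf_ge1_negligible (rho : probability R R) :
  (forall x, rho [set x] = 0%E) -> rho.-negligible [set t | 1 <= Defs.cdf rho t].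
Proof.
move=> rho_noatom; set N := [set t | _].
pose Nmin := [set t | N t /\ forall u, N u -> t <= u].
pose Nq (q : rat) := [set t : R | (exists2 u, N u & u < ratr q) /\ ratr q < t].
apply: (@negligibleS _ _ _ _ (Nmin `|` \bigcup_q Nq q)); last first.
  apply: negligibleU.
    have [[t0 [Nt0 t0min]]|noNmin] := pselect (exists t0, Nmin t0).
      exists [set t0]; split; [by []|exact: rho_noatom|move=> t [Nt tmin] /=].
      by apply/le_anti; rewrite tmin ?t0min.
    by exists set0; split => // t Nmint; apply: noNmin; exists t.
  apply: negligible_bigcup_count => q.
  have [[u Nu uq]|noNu] := pselect (exists2 u, N u & u < ratr q).
    apply: negligibleS (cdf_ge1_tail_negligible _ Nu) => t [_ qt].
    by rewrite /= in_itv /= andbT (lt_trans uq qt).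
  by exists set0; split => // t [].
move=> t Nt; have [tmin|] := pselect (forall u, N u -> t <= u); first by left.
move=> /existsNP[u /not_implyP[Nu /negP]]; rewrite -ltNge => ut.
have /rat_in_itvoo[q] := ut; rewrite in_itv /= => /andP[uq qt].
by right; exists q => //; split => //; exists u.
Qed.

End Cdf.

Section BoundedIntegral.
Context {d} {T : measurableType d} {R : realType}.

Lemma integrable_bounded (mu : {finite_measure set T -> \bar R}) {h : T -> R} {K : R} :
  measurable_fun setT h -> (forall x, `|h x| <= K) -> mu.-integrable setT (EFin \o h).
Proof.
move=> mh hK; apply: measurable_bounded_integrable => //.
  by rewrite ltey_eq fin_num_measure.
exists K; split; first exact: num_real.
by move=> M KM x _; rewrite /= (le_trans (hK x)) ?ltW.
Qed.

Lemma fine_integral_aeEFin (mu : {measure set T -> \bar R}) {g : T -> \bar R}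
    {h : T -> R} :
  measurable_fun setT g -> measurable_fun setT h -> g = EFin \o h %[ae mu] ->
  fine (\int[mu]_x g x)%E = \int[mu]_x h x.
Proof.
by move=> mg mh gh; rewrite (ae_eq_integral _ _ _ _ _ gh) //; exact/measurable_EFinP.
Qed.

End BoundedIntegral.

Section AffineNormalization.
Context {R : realType} (rho : probability R R).

(* [NRCDT rho mu theta] unfolds to [normalized rho (cdt rho (radon mu theta))]. *)
Definition normalized (g : R -> \bar R) t :=
  ((g t - (Defs.mean rho g)%:E) * ((Defs.std rho g)^-1)%:E)%E.

Variables (g : R -> \bar R) (h : R -> R) (K : R).
Hypotheses (mg : measurable_fun setT g) (mh : measurable_fun setT h).
Hypotheses (hK : forall t, `|h t| <= K) (gh : g = EFin \o h %[ae rho]).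

Let ih : rho.-integrable setT (EFin \o h) := integrable_bounded rho mh hK.

Let measurable_affine (c b : R) :
  measurable_fun setT (fun t => c%:E * g t + b%:E)%E.
Proof. by apply: emeasurable_funD => //; exact: measurable_funeM. Qed.

Lemma mean_affine c b :
  Defs.mean rho (fun t => c%:E * g t + b%:E)%E = c * Defs.mean rho g + b.
Proof.
have mh' : measurable_fun setT (fun t => c * h t + b).
  by apply: measurable_funD => //; exact: measurable_funM.
have gh' : (fun t => c%:E * g t + b%:E)%E = EFin \o (fun t => c * h t + b) %[ae rho].
  by apply: filterS gh => t /[apply] /= ->.
rewrite /Defs.mean (fine_integral_aeEFin rho (measurable_affine c b) mh' gh').
rewrite (fine_integral_aeEFin rho mg mh gh) RintegralD //.
- rewrite RintegralZl // Rintegral_cst // (_ : fine _ = 1) ?mulr1 //.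
  exact: (congr1 fine (probability_setT rho)).
- by apply: eq_integrable (integrableZl measurableT c ih) => // t _; rewrite /= EFinM.
- exact: (integrable_bounded rho (measurable_cst b) (fun _ => lexx `|b|)).
Qed.

Let measurable_sqrdev (a : R) {f : R -> \bar R} : measurable_fun setT f ->
  measurable_fun setT (fun t => (f t - a%:E) * (f t - a%:E))%E.
Proof. by move=> mf; apply: emeasurable_funM; exact: emeasurable_funB. Qed.

Lemma std_affine c b : 0 <= c ->
  Defs.std rho (fun t => c%:E * g t + b%:E)%E = c * Defs.std rho g.
Proof.
move=> c0; rewrite /Defs.std mean_affine; set m := Defs.mean rho g.
pose q t := (h t - m) * (h t - m).
have mq : measurable_fun setT q.
  by apply: measurable_funM; apply: measurable_funB.
have mcq : measurable_fun setT (fun t => c ^+ 2 * q t) by exact: measurable_funM.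
have iq : rho.-integrable setT (EFin \o q).
  apply: (integrable_bounded rho (K := (K + `|m|) ^+ 2) mq) => t.
  have hmK : `|h t - m| <= K + `|m| by rewrite (le_trans (ler_normB _ _)) ?lerD2r.
  by rewrite /q -expr2 normrX lerXn2r // nnegrE (le_trans _ hmK).
have gq : (fun t => (g t - m%:E) * (g t - m%:E))%E = EFin \o q %[ae rho].
  by apply: filterS gh => t /[apply] /= ->.
have gcq : (fun t => (c%:E * g t + b%:E - (c * m + b)%:E) *
                     (c%:E * g t + b%:E - (c * m + b)%:E))%E =
           EFin \o (fun t => c ^+ 2 * q t) %[ae rho].
  apply: filterS gh => t /[apply] /= ->.
  by rewrite -!EFinM /q; congr EFin; ring.
rewrite (fine_integral_aeEFin rho (measurable_sqrdev _ (measurable_affine c b)) mcq gcq).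
rewrite (fine_integral_aeEFin rho (measurable_sqrdev _ mg) mq gq) RintegralZl //.
by rewrite sqrtrM ?sqr_ge0 // sqrtr_sqr ger0_norm.
Qed.

Lemma normalized_affine c b : 0 < c ->
  normalized (fun t => c%:E * g t + b%:E)%E =1 normalized g.
Proof.
move=> c0 t; rewrite /normalized mean_affine std_affine ?ltW //.
set m := Defs.mean rho g; set s := Defs.std rho g.
have [->|s0] := eqVneq s 0; first by rewrite mulr0 invr0 !mule0.
have s_gt0 : 0 < s by rewrite lt_def s0 sqrtr_ge0.
have cs_gt0 : 0 < c * s by rewrite mulr_gt0.
case: (g t) => [r||] /=.
- by rewrite -!EFinM; congr EFin; field; rewrite s0 gt_eqF.
- by rewrite !gt0_muley ?lte_fin // !gt0_mulye ?lte_fin ?invr_gt0.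
- by rewrite !gt0_muleNy ?lte_fin // !gt0_mulNye ?lte_fin ?invr_gt0.
Qed.

End AffineNormalization.

Lemma nondecreasing_emeasurable {R : realType} {f : R -> \bar R} :
  {homo f : s t / s <= t >-> (s <= t)%E} -> measurable_fun setT f.
Proof.
move=> f_nd; apply: (measurability _ (ErealGenCInfty.measurableE R)).
move=> _ [_ [x ->] <-]; apply: measurableI => //; apply: is_interval_measurable.
move=> s t /=; rewrite !in_itv /= !andbT => fs ft u /andP[su ut].
by rewrite in_itv /= andbT (le_trans fs) // f_nd.
Qed.

Section Cdt.
Context {R : realType} (rho : {finite_measure set R -> \bar R}).

Lemma cdt_nondecreasing (nu : set R -> \bar R) :
  {homo cdt rho nu : s t / s <= t >-> (s <= t)%E}.
Proof. by move=> s t st; apply/ginv_le/cdf_le. Qed.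

Lemma cdt_pushforward_affine {d} {T : measurableType d} (mu : set T -> \bar R)
    (f : T -> R) (c b : R) : 0 < c ->
  cdt rho (pushforward mu (fun x => c * f x + b)) =
  (fun t => c%:E * cdt rho (pushforward mu f) t + b%:E)%E.
Proof.
move=> c0; apply/funext => t; rewrite /cdt -ginv_comp_affine //; congr ginv.
apply/funext => s; rewrite /Defs.cdf /pushforward; congr (fine (mu _)).
by apply/seteqP; split => x /=; rewrite !in_itv /= ler_pdivlMr // lerBrDr mulrC.
Qed.

End Cdt.

Section BoundedCdt.
Context {R : realType} (rho : probability R R).
Hypothesis rho_noatom : forall x, rho [set x] = 0%E.
Context {d} {T : measurableType d} (P : probability T R) {f : T -> R}.
Hypothesis mf : measurable_fun setT f.
Variable K : R.
Hypotheses (K0 : 0 <= K) (fK : {ae P, forall x, `|f x| <= K}).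

Let g := cdt rho (pushforward P f).

Let cdt_bounded t : Defs.cdf rho t < 1 -> ((- K)%:E <= g t <= K%:E)%E.
Proof.
move=> rho1; apply: ginv_bounded.
- exact: cdf_pushforward_eq0 fK.
- exact: cdf_pushforward_eq1 fK.
- by rewrite cdf_ge0 rho1.
Qed.

(* [fine] maps the infinite values of the CDT to 0. *)
Let cdt_fine_bounded t : `|fine (g t)| <= K.
Proof.
have [/cdt_bounded|rho1] := ltP (Defs.cdf rho t) 1.
  by case: (g t) => [r||] /=; rewrite ?normr0 ?lee_fin ?ler_norml.
by rewrite /g /cdt ginv_ge1 ?normr0 //; exact: cdf_pushforward_le1.
Qed.

Let cdt_ae_fin : g = EFin \o (fine \o g) %[ae rho].
Proof.
apply: negligibleS (cdf_ge1_negligible rho rho_noatom) => t /= gt_fin.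
rewrite leNgt; apply/negP => /cdt_bounded gK; apply: gt_fin; move: gK.
by case: (g t) => //= /andP[_]; rewrite leye_eq.
Qed.

Lemma normalized_cdt_pushforward_affine c b : 0 < c ->
  normalized rho (cdt rho (pushforward P (fun x => c * f x + b))) =1
  normalized rho g.
Proof.
move=> c0; rewrite (cdt_pushforward_affine rho P f c b c0).
have mg : measurable_fun setT g.
  exact: nondecreasing_emeasurable (cdt_nondecreasing rho _).
have mh : measurable_fun setT (fine \o g).
  by apply: measurableT_comp => //; exact: fine_measurable.
exact: normalized_affine mg mh cdt_fine_bounded cdt_ae_fin _ _ c0.
Qed.

End BoundedCdt.

Theorem proposition6 (R : realType) (rho : probability R R)
  (rho_noatom : forall x : R, rho [set x] = 0%E)
  (mu : probability (R * R)%type R) (hmu : Pcstar mu)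
  (A : 'M[R]_2) (hA : A \in unitmx) (y theta : R * R) (htheta : S1 theta) :
  forall t : R,
    NRCDT rho (mu_Ay mu A y) theta t =
    NRCDT rho mu (scale2 (norm2 (mxapp2 A^T theta))^-1 (mxapp2 A^T theta)) t.
Proof.
set v := mxapp2 A^T theta; set c := norm2 v; set w := scale2 c^-1 v.
have detAT : \det A^T != 0 by rewrite det_tr -unitfE -unitmxE.
have c_gt0 : 0 < c.
  apply: norm2_gt0; apply: contra (S1_neq0 htheta) => /eqP v0.
  exact/eqP/(mxapp2_eq0 _ _ detAT v0).
have radonE : radon (mu_Ay mu A y) theta =
              pushforward mu (fun x => c * dot2 x w + dot2 y theta).
  apply/funext => X; rewrite /radon /mu_Ay /pushforward; congr (mu _).
  apply/seteqP; split => x /=;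
    by rewrite dot2_affmap2 dot2_scale2 mulrA mulfV ?gt_eqF ?mul1r.
have [K K0 dotK] := compact_msupp_dot2_bounded w hmu.1.
move=> t; rewrite /NRCDT /= radonE.
exact: (normalized_cdt_pushforward_affine rho rho_noatom mu (measurable_dot2 w)
  K K0 dotK c (dot2 y theta) c_gt0 t).
Qed.
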